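(* Let $B$ be the set of irrational $x\in(0,1)$ whose $\bar O^1$-symbols are bounded, i.e. there exists $K_x\in\mathbb{N}$ with $g_k(x)\le K_x$ for all $k\in\mathbb{N}$. Then $\dim_H(B)=0$.
   Context: Every irrational $x\in(0,1)$ has a unique representation ($\bar O^1$-expansion) $$x=\sum_{k=1}^\infty\frac{(-1)^{k-1}}{g_1(g_1+g_2)\cdots(g_1+g_2+\dots+g_k)},\qquad g_k=g_k(x)\in\mathbb{N}=\{1,2,3,\dots\}.$$ The numbers $g_k(x)$ are called the $\bar O^1$-symbols of $x$. $\dim_H$ denotes Hausdorff dimension. *)

From HB Require Import structures.
From mathcomp Require Import all_boot all_order all_algebra.
From mathcomp Require Import all_classical all_reals all_analysis.
Set Implicit Arguments. Unset Strict Implicit. Unset Printing Implicit Defensive.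
Import Order.TTheory GRing.Theory Num.Theory.
Import numFieldNormedType.Exports.
Local Open Scope classical_set_scope.
Local Open Scope ring_scope.

Section O1.
Variable R : realType.

Definition irrational (x : R) : Prop := ~ exists q : rat, x = ratr q.

(* k-th term (0-based, k = paper's k-1) of the O1-bar series built from the
   digit sequence g, where g j stands for the paper's g_{j+1}:
   (-1)^k / (g_1 (g_1+g_2) ... (g_1+...+g_{k+1})) *)
Definition O1_term (g : nat -> nat) (k : nat) : R :=
  (-1) ^+ k / (\prod_(i < k.+1) (\sum_(j < i.+1) g j)%N%:R).

Definition is_O1_expansion (x : R) (g : nat -> nat) : Prop :=
  (forall k, (0 < g k)%N) /\
  (fun n => \sum_(k < n) O1_term g k) @ \oo --> x.

(* The O1-bar symbols of x: (O1_symbols x) j = g_{j+1}(x), the digits of the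
   (unique, for irrational x in (0,1)) O1-bar expansion of x. *)
Definition O1_symbols (x : R) : nat -> nat := get (is_O1_expansion x).

Definition O1_bounded_set : set R :=
  [set x | irrational x /\ 0 < x < 1 /\
           exists K : nat, forall k, (O1_symbols x k <= K)%N].

Local Open Scope ereal_scope.

Definition diam (U : set R) : \bar R :=
  ereal_sup ([set 0%E] `|` [set (`|x - y|)%:E | x in U & y in U]).

Definition cover_term (s : R) (U : set R) : \bar R :=
  if asbool (U = set0) then 0%E else ((fine (diam U)) `^ s)%:E.

Definition hausdorff_pre (s delta : R) (A : set R) : \bar R :=
  ereal_inf [set \sum_(0 <= i <oo) cover_term s (U i) |
               U in [set U : nat -> set R |
                       A `<=` \bigcup_i U i /\
                       forall i, diam (U i) <= delta%:E]].

(* H^s(A) = lim_{delta -> 0+} H^s_delta(A) = sup_{delta > 0} H^s_delta(A) *)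
Definition hausdorff_measure (s : R) (A : set R) : \bar R :=
  ereal_sup [set hausdorff_pre s delta A | delta in [set d : R | (0 < d)%R]].

Definition hausdorff_dim (A : set R) : R :=
  inf [set s : R | (0 <= s)%R /\ hausdorff_measure s A = 0].

End O1.

(* A point of the bounded set is determined, up to 2/(n+1)!, by its first n
   symbols: the terms of the expansion are bounded by 1/(k+1)!, so the tail
   after n terms is at most 2/(n+1)!. If the symbols are bounded by K there
   are at most (K+1)^n choices for them, so the points with symbols bounded
   by K are covered by (K+1)^n intervals of length 4/(n+1)!. For every s > 0,
   (K+1)^n (4/(n+1)!)^s tends to 0 as n grows since n! beats every
   exponential; summing over K with weights e/2^(K+1) shows H^s(B) = 0. *)

From Pilot Require Import Defs.
From HB Require Import structures.
From mathcomp Require Import all_boot all_order all_algebra.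
From mathcomp Require Import all_classical all_reals all_analysis.
From mathcomp Require Import ring lra.
Set Implicit Arguments. Unset Strict Implicit. Unset Printing Implicit Defensive.
Import Order.TTheory GRing.Theory Num.Theory.
Import numFieldNormedType.Exports.
Local Open Scope classical_set_scope.
Local Open Scope ring_scope.

Section FlattenFamily.
Variables (T : Type) (b : nat -> nat) (V : nat -> nat -> set T).

Definition block_start m : nat := \sum_(k < m) b k.

Definition flatten_family i : set T :=
  [set y | exists m j, [/\ i = (block_start m + j)%N, (j < b m)%N & V m j y]].

Lemma block_startS m : block_start m.+1 = (block_start m + b m)%N.
Proof. by rewrite /block_start big_ord_recr. Qed.

Lemma leq_block_start : {homo block_start : m n / (m <= n)%N}.
Proof. by move=> m n /subnKC <-; rewrite /block_start big_split_ord leq_addr. Qed.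

Lemma leq_block_start_self N : (forall m, 0 < b m)%N -> (N <= block_start N)%N.
Proof.
move=> b_gt0; elim: N => // N IH.
by rewrite block_startS -addn1 leq_add.
Qed.

Lemma flatten_familyE m j : (j < b m)%N ->
  flatten_family (block_start m + j) = V m j.
Proof.
move=> jm; apply/seteqP; split => [y [m' [j' [E j'm' Vy]]]|y Vy]; last by exists m, j.
suff mm' : m = m' by move: E Vy; rewrite mm' => /addnI ->.
have block_lt k l i : (i < b k)%N -> (k < l)%N -> (block_start k + i < block_start l)%N.
  move=> ik kl; apply: leq_trans (leq_block_start kl).
  by rewrite block_startS ltn_add2l.
case: (ltngtP m m') => // [mm'|m'm].
  by have := block_lt _ _ _ jm mm'; rewrite E ltnNge leq_addr.
by have := block_lt _ _ _ j'm' m'm; rewrite -E ltnNge leq_addr.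
Qed.

Lemma flatten_family_cases i : flatten_family i = set0 \/
  exists m j, (j < b m)%N /\ flatten_family i = V m j.
Proof.
case: (pselect (exists m j, i = (block_start m + j)%N /\ (j < b m)%N)).
  by move=> [m [j [-> jm]]]; right; exists m, j; rewrite flatten_familyE.
move=> Ni; left; apply/seteqP; split => y // [m [j [E jm _]]].
by apply: Ni; exists m, j.
Qed.

Lemma sum_flatten_family (M : nmodType) (f : set T -> M) N :
  \sum_(i < block_start N) f (flatten_family i) =
  \sum_(m < N) \sum_(j < b m) f (V m j).
Proof.
elim: N => [|N IH]; first by rewrite /block_start !big_ord0.
rewrite big_ord_recr -IH block_startS.
rewrite -!(big_mkord xpredT (fun i => f (flatten_family i))).
rewrite (big_cat_nat _ (leq_addr _ _)) //=; congr (_ + _).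
rewrite -{1}[block_start N]add0n big_addn addKn big_mkord.
by apply: eq_bigr => j _; rewrite addnC flatten_familyE.
Qed.

End FlattenFamily.

Section HausdorffBallCovers.
Variable R : realType.
Local Open Scope ereal_scope.

Lemma diam_ge0 (U : set R) : 0 <= diam U.
Proof. by apply: ereal_sup_ubound; left. Qed.

Lemma diam_set0 : diam (@set0 R) = 0.
Proof.
by apply/le_anti; rewrite diam_ge0 andbT; apply: ge_ereal_sup => z [-> | [x []]].
Qed.

Lemma diam_closed_ball_le (c r : R) : (0 <= r)%R ->
  diam [set y | `|y - c| <= r]%R <= (2 * r)%:E.
Proof.
move=> r0; apply: ge_ereal_sup => z [-> | [x xc [y yc <-]]].
  by rewrite lee_fin mulr_ge0.
rewrite lee_fin; apply: le_trans (ler_distD c x y) _.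
by rewrite mulr2n mulrDl mul1r lerD // distrC.
Qed.

Lemma cover_term_ge0 (s : R) U : 0 <= cover_term s U.
Proof. by rewrite /cover_term; case: asbool; rewrite // lee_fin powR_ge0. Qed.

Lemma cover_term_le (s d : R) U : (0 <= s)%R -> (0 <= d)%R ->
  diam U <= d%:E -> cover_term s U <= (d `^ s)%:E.
Proof.
move=> s0 d0 Ud; rewrite /cover_term; case: asbool; first by rewrite lee_fin powR_ge0.
move: (diam_ge0 U) Ud; case: (diam U) => [u | | ] //= u0 ud.
by rewrite lee_fin ge0_ler_powR // nnegrE -lee_fin.
Qed.

Lemma hausdorff_pre_ge0 (s delta : R) A : 0 <= hausdorff_pre s delta A.
Proof.
apply: le_ereal_inf_tmp => z [U _ <-].
by apply: nneseries_ge0 => k _ _; exact: cover_term_ge0.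
Qed.

Lemma sum_div_pow2S (e : R) N : (\sum_(m < N) e / 2 ^+ m.+1 = e - e / 2 ^+ N)%R.
Proof.
elim: N => [|N IH]; first by rewrite big_ord0 expr0 divr1 subrr.
by rewrite big_ord_recr /= IH exprS; field; rewrite expf_neq0.
Qed.

Lemma sum_cover_term_balls_le (s r : R) (c : seq R) : (0 <= s)%R -> (0 <= r)%R ->
  \sum_(j < size c) cover_term s [set y | `|y - nth 0 c j| <= r]%R
    <= ((size c)%:R * (2 * r) `^ s)%:E.
Proof.
move=> s0 r0; apply: (@le_trans _ _ (\sum_(j < size c) ((2 * r) `^ s)%R%:E)).
  apply: lee_sum => j _; apply: cover_term_le s0 _ (diam_closed_ball_le _ r0).
  by rewrite mulr_ge0.
by rewrite sumEFin lee_fin sumr_const card_ord [in leRHS]mulr_natl.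
Qed.

Lemma hausdorff_pre_le_ball_cover (s delta e : R) (A : set R)
    (c : nat -> seq R) (r : nat -> R) :
  (0 <= s)%R -> (forall m, c m != [::]) -> (forall m, 0 <= r m)%R ->
  (forall m, 2 * r m <= delta)%R ->
  (forall m, (size (c m))%:R * (2 * r m) `^ s <= e / 2 ^+ m.+1)%R ->
  A `<=` [set y | exists m, exists2 z, z \in c m & `|y - z| <= r m]%R ->
  hausdorff_pre s delta A <= e%:E.
Proof.
move=> s0 c_neq0 r0 r_delta size_r Acov.
set b := fun m => size (c m).
set V := fun m j => [set y | `|y - nth 0%R (c m) j| <= r m]%R.
have b_gt0 m : (0 < b m)%N by rewrite lt0n size_eq0.
apply: le_trans (ereal_inf_lbound _) _.
  exists (flatten_family b V) => //; split.
    move=> y /Acov [m [z zc yz]]; exists (block_start b m + index z (c m))%N => //.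
    by rewrite flatten_familyE ?index_mem // /V nth_index.
  move=> i; case: (flatten_family_cases b V i) => [-> | [m [j [_ ->]]]].
    by rewrite diam_set0 lee_fin (le_trans _ (r_delta 0%N)) ?mulr_ge0.
  by apply: le_trans (diam_closed_ball_le _ (r0 m)) _; rewrite lee_fin.
apply: lime_le; first by apply: is_cvg_nneseries => i _ _; exact: cover_term_ge0.
exists 0%N => // N _ /=; rewrite big_mkord.
apply: le_trans (@lee_sum_nneg_ord _ (fun i => cover_term s (flatten_family b V i))
  xpredT (fun i _ => cover_term_ge0 s _) _ _ (leq_block_start_self N b_gt0)) _.
rewrite sum_flatten_family.
apply: (@le_trans _ _ (\sum_(m < N) ((size (c m))%:R * (2 * r m) `^ s)%R%:E)).
  by apply: lee_sum => m _; exact: sum_cover_term_balls_le.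
rewrite sumEFin lee_fin; apply: (@le_trans _ _ (\sum_(m < N) e / 2 ^+ m.+1)%R).
  by apply: ler_sum => m _; exact: size_r.
have e0 : (0 <= e)%R.
  rewrite -(@pmulr_lge0 _ (2 ^+ 1)^-1) ?invr_gt0 ?exprn_gt0 //.
  by apply: le_trans (size_r 0%N); rewrite mulr_ge0 ?powR_ge0.
by rewrite sum_div_pow2S gerBl divr_ge0 ?exprn_ge0.
Qed.

End HausdorffBallCovers.

Lemma inf_eq0 (R : realType) (S : set R) :
  (forall e, 0 < e -> S e) -> (forall e, S e -> 0 <= e) -> inf S = 0.
Proof.
move=> S_pos S_ge0; have S_lb : has_lbound S by exists 0.
apply/le_anti/andP; split; last by apply: lb_le_inf; [exists 1; apply: S_pos|].
rewrite leNgt; apply/negP => inf_gt0.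
have := ge_inf S_lb (S_pos _ (divr_gt0 inf_gt0 (ltr0Sn _ 1))).
lra.
Qed.

Section O1Algorithm.
Variable R : realType.
Implicit Types (x y : R).

Lemma irrational_1_subMn y s :
  Defs.irrational y -> (0 < s)%N -> Defs.irrational (1 - s%:R * y).
Proof.
rewrite /Defs.irrational => y_irr s0 [q Hq]; apply: y_irr; exists ((1 - q) / s%:R).
have sN0 : (s%:R : R) != 0 by rewrite pnatr_eq0 -lt0n.
rewrite (fmorph_div (ratr : {rmorphism rat -> R})) rmorphB rmorph1 rmorph_nat.
by transitivity ((1 - (1 - s%:R * y)) / s%:R); [field | rewrite Hq].
Qed.

Lemma irrational_natrM_neq1 y s : Defs.irrational y -> s%:R * y != 1.
Proof.
rewrite /Defs.irrational => y_irr; apply/eqP => sy1; apply: y_irr; exists s%:R^-1.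
have sN0 : (s%:R : R) != 0.
  by apply: contra_eqN sy1 => /eqP ->; rewrite mul0r eq_sym oner_neq0.
by rewrite fmorphV rmorph_nat; apply: (mulfI sN0); rewrite sy1 mulfV.
Qed.

Lemma O1_step_spec y (sp : nat) :
  Defs.irrational y -> 0 < y -> y * (sp%:R + 1) < 1 ->
  let s := Num.truncn y^-1 in
  [/\ Defs.irrational (1 - s%:R * y), 0 < 1 - s%:R * y,
      (1 - s%:R * y) * (s%:R + 1) < 1 & (sp < s)%N].
Proof.
move=> y_irr y0 ysp s.
have /andP[sy1 sy2] : s%:R * y <= 1 < (s%:R + 1) * y.
  rewrite -ler_pdivlMr // -ltr_pdivrMr // div1r natr1.
  by apply: Num.Theory.truncn_itv; rewrite invr_ge0 ltW.
have sps : (sp < s)%N.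
  rewrite Num.Theory.truncn_ge_nat ?invr_ge0 ?ltW //.
  by rewrite -div1r ltr_pdivlMr // mulrC -natr1.
have s0 : (0 : R) < s%:R by rewrite ltr0n; apply: leq_ltn_trans sps.
split=> //.
- by apply: irrational_1_subMn; first exact: y_irr; apply: leq_ltn_trans sps.
- by rewrite subr_gt0 lt_neqAle sy1 irrational_natrM_neq1.
- have : 0 < s%:R * ((s%:R + 1) * y - 1) by rewrite mulr_gt0 // subr_gt0.
  nra.
Qed.

(* [O1_state x n = (y_n, s_n)], where s_n = g_1 + ... + g_n and y_n is the
   remainder in x = S_n + (-1)^n y_n / (s_1 ... s_n); greedily,
   s_(n+1) = floor (1 / y_n) and y_(n+1) = 1 - s_(n+1) y_n. *)
Definition O1_step (p : R * nat) : R * nat :=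
  let s := Num.truncn p.1^-1 in (1 - s%:R * p.1, s).

Fixpoint O1_state x n : R * nat :=
  if n is k.+1 then O1_step (O1_state x k) else (x, 0%N).

Definition O1_digits x k : nat := ((O1_state x k.+1).2 - (O1_state x k).2)%N.

Variables (x : R) (x_irr : Defs.irrational x) (x01 : 0 < x < 1).

Lemma O1_state_spec k :
  [/\ Defs.irrational (O1_state x k).1, 0 < (O1_state x k).1,
      (O1_state x k).1 * ((O1_state x k).2%:R + 1) < 1 &
      ((O1_state x k).2 < (O1_state x k.+1).2)%N].
Proof.
suff inv : [/\ Defs.irrational (O1_state x k).1, 0 < (O1_state x k).1 &
    (O1_state x k).1 * ((O1_state x k).2%:R + 1) < 1].
  by case: inv => y_irr y_gt0 y_lt; have [] := O1_step_spec y_irr y_gt0 y_lt.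
elim: k => [|k [y_irr y_gt0 y_lt]] /=.
  by case/andP: x01 => x0 x1; rewrite add0r mulr1.
by have [] := O1_step_spec y_irr y_gt0 y_lt.
Qed.

Lemma leq_O1_state k : (k <= (O1_state x k).2)%N.
Proof.
elim: k => // k IH; apply: leq_ltn_trans IH _.
by case: (O1_state_spec k).
Qed.

Lemma O1_digits_gt0 k : (0 < O1_digits x k)%N.
Proof. by rewrite subn_gt0; case: (O1_state_spec k). Qed.

Lemma sum_O1_digits i : (\sum_(j < i) O1_digits x j)%N = (O1_state x i).2.
Proof.
elim: i => [|i IH]; first by rewrite big_ord0.
by rewrite big_ord_recr /= IH subnKC // ltnW //; case: (O1_state_spec i).
Qed.

Lemma O1_state_remainder n : x = \sum_(k < n) O1_term R (O1_digits x) k +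
  (-1) ^+ n * (O1_state x n).1 / \prod_(i < n) ((O1_state x i.+1).2)%:R.
Proof.
elim: n => [|n IH]; first by rewrite !big_ord0 add0r expr0 mul1r divr1.
rewrite big_ord_recr /= {1}IH -addrA; congr (_ + _).
rewrite /O1_term (eq_bigr (fun i : 'I_n.+1 => ((O1_state x i.+1).2)%:R)); last first.
  by move=> i _; rewrite sum_O1_digits.
have s_neq0 i : ((O1_state x i.+1).2%:R : R) != 0.
  by rewrite pnatr_eq0 -lt0n; apply: leq_trans (leq_O1_state i.+1).
have P_neq0 : \prod_(i < n) ((O1_state x i.+1).2%:R : R) != 0.
  by rewrite prodf_seq_neq0; apply/allP => i _ /=; exact: s_neq0.
rewrite big_ord_recr /= exprS; move: (s_neq0 n) P_neq0 => /=.
rewrite /O1_step /=; move: (Num.truncn _) => s s0 P0; field.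
by rewrite P0 s0.
Qed.

Lemma O1_digits_expansion : is_O1_expansion x (O1_digits x).
Proof.
split; first exact: O1_digits_gt0.
apply/cvgrPdist_le => e e0.
move/cvgrPdist_le : (@cvg_harmonic R) => /(_ e e0); apply: filterS => n.
rewrite sub0r normrN {1}(O1_state_remainder n) addrC addKr => /(le_trans _); apply.
have [_ y0 yle _] := O1_state_spec n.
set y := (O1_state x n).1 in y0 yle *; set P := \prod_(i < n) _.
have P1 : 1 <= P.
  rewrite /P -natr_prod ler1n prodn_gt0 // => i.
  by apply: leq_trans (leq_O1_state i.+1).
rewrite -mulrA normrM normrX normrN1 expr1n mul1r ger0_norm; last first.
  by rewrite divr_ge0 // ltW // (lt_le_trans ltr01).
rewrite ger0_norm ?harmonic_ge0 // ler_pdivrMr ?(lt_le_trans ltr01) //.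
apply: (@le_trans _ _ (n.+1%:R^-1)); last by rewrite ler_peMr // invr_ge0.
rewrite -div1r ler_pdivlMr // ltW //; apply: le_lt_trans yle.
apply: ler_wpM2l; first exact: ltW.
by rewrite natr1 ler_nat ltnS leq_O1_state.
Qed.

End O1Algorithm.

Section O1Tail.
Variable R : realType.
Implicit Types (x : R) (g : nat -> nat).

Lemma fact_le_prod_sum_digits g k : (forall j, (0 < g j)%N) ->
  (k.+1`! <= \prod_(i < k.+1) \sum_(j < i.+1) g j)%N.
Proof.
move=> g_gt0; elim: k => [|k IH]; first by rewrite !big_ord1 g_gt0.
rewrite factS big_ord_recr /= mulnC leq_mul //.
have : (\sum_(j < k.+2) 1 <= \sum_(j < k.+2) g j)%N by apply: leq_sum => j _.
by rewrite sum_nat_const card_ord muln1.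
Qed.

Lemma norm_O1_term_le g k : (forall j, (0 < g j)%N) ->
  `|O1_term R g k| <= (k.+1`!%:R)^-1.
Proof.
move=> g_gt0; rewrite /O1_term -natr_prod normrM normrX normrN1 expr1n mul1r.
rewrite ger0_norm ?invr_ge0 // lef_pV2 ?posrE ?ltr0n ?fact_gt0 ?ler_nat //.
  exact: fact_le_prod_sum_digits.
exact: leq_trans (fact_gt0 _) (fact_le_prod_sum_digits _ g_gt0).
Qed.

Lemma sum_inv_fact_le n d :
  \sum_(n <= k < n + d) (k.+1`!%:R : R)^-1 + 2 * ((n + d).+1`!%:R)^-1
    <= 2 * (n.+1`!%:R)^-1.
Proof.
elim: d => [|d IH]; first by rewrite addn0 big_geq // add0r.
apply: le_trans IH; rewrite addnS big_nat_recr ?leq_addr //= -addrA lerD2l.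
suff : 2 * ((n + d).+2`!%:R)^-1 <= ((n + d).+1`!%:R : R)^-1 by lra.
rewrite factS natrM invfM mulrA ler_piMl ?invr_ge0 //.
by rewrite ler_pdivrMr ?ltr0n // mul1r ler_nat.
Qed.

Lemma O1_expansion_tail_le x g n : is_O1_expansion x g ->
  `|x - \sum_(k < n) O1_term R g k| <= 2 * (n.+1`!%:R)^-1.
Proof.
move=> [g_gt0 Sx]; set S := fun m => \sum_(k < m) O1_term R g k.
have Sn_x : (fun m => `|S m - S n|) @ \oo --> `|x - S n|.
  by apply: cvg_norm; apply: cvgB => //; exact: cvg_cst.
rewrite -(cvg_lim _ Sn_x) //; apply: limr_le; first by apply/cvg_ex; exists `|x - S n|.
exists n => // m /= /subnKC <-; rewrite /S -!(big_mkord xpredT).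
rewrite (big_cat_nat _ (leq_addr _ _)) //= addrAC subrr add0r.
apply: le_trans (ler_norm_sum _ _ _) _; apply: le_trans (sum_inv_fact_le n (m - n)).
rewrite -[X in X <= _]addr0; apply: lerD; last by rewrite mulr_ge0 ?invr_ge0.
by apply: ler_sum => k _; exact: norm_O1_term_le.
Qed.

End O1Tail.

Section O1BoundedSet.
Variable R : realType.
Implicit Types (x : R) (g : nat -> nat).

(* [O1_symbols] is defined by [get], so it is an expansion of [x] only once
   some expansion is known to exist: the greedy one above. *)
Lemma O1_symbols_expansion x : Defs.irrational x -> 0 < x < 1 ->
  is_O1_expansion x (O1_symbols x).
Proof.
by move=> x_irr x01; apply: getPex; exists (O1_digits x); exact: O1_digits_expansion.
Qed.

Lemma O1_term_eq g g' k : (forall i, (i <= k)%N -> g i = g' i) ->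
  O1_term R g k = O1_term R g' k.
Proof.
move=> gg'; rewrite /O1_term; congr (_ / _); apply: eq_bigr => i _.
congr (_%:R); apply: eq_bigr => j _; apply: gg'.
exact: leq_trans (ltnSE (ltn_ord j)) (ltnSE (ltn_ord i)).
Qed.

Definition O1_centers (K n : nat) : seq R :=
  [seq \sum_(k < n) O1_term R (fun i => nat_of_ord (nth ord0 t i)) k
  | t : n.-tuple 'I_K.+1].

Lemma size_O1_centers K n : size (O1_centers K n) = (K.+1 ^ n)%N.
Proof. by rewrite size_map -cardE card_tuple card_ord. Qed.

Lemma O1_bounded_set_near_centers x : O1_bounded_set x -> exists K, forall n,
  exists2 z, z \in O1_centers K n & `|x - z| <= 2 * (n.+1`!%:R)^-1.
Proof.
move=> [x_irr [x01 [K gK]]]; exists K => n.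
set t : n.-tuple 'I_K.+1 := [tuple inord (O1_symbols x i) | i < n].
exists (\sum_(k < n) O1_term R (fun i => nat_of_ord (nth ord0 t i)) k).
  by apply: map_f; rewrite mem_enum.
rewrite (eq_bigr (fun k : 'I_n => O1_term R (O1_symbols x) k)).
  exact/O1_expansion_tail_le/O1_symbols_expansion.
move=> k _; apply: O1_term_eq => i ik.
have i_lt : (i < n)%N := leq_ltn_trans ik (ltn_ord k).
by rewrite (nth_mktuple _ _ (Ordinal i_lt)) inordK // ltnS gK.
Qed.

Lemma exp_coeff_le_eventually (a e : R) : 0 < e ->
  \forall n \near \oo, a ^+ n / n`!%:R <= e.
Proof.
move=> e0; move/cvgr0_norm_le : (cvg_exp_coeff a) => /(_ e e0).
by apply: filterS => n; apply: le_trans (ler_norm _).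
Qed.

Lemma exists_depth (K : nat) (s eps : R) : 0 < s -> 0 < eps -> exists n : nat,
  4 * (n.+1`!%:R)^-1 <= eps /\ (K.+1 ^ n)%:R * (4 * (n.+1`!%:R)^-1) `^ s <= eps.
Proof.
(* With q = (K+1)^(1/s): (K+1)^n (4/(n+1)!)^s <= (4 q^n / n!)^s, and q^n/n! -> 0. *)
move=> s0 eps0; set q := K.+1%:R `^ s^-1.
have q0 : 0 <= q := powR_ge0 _ _.
have qs : q `^ s = K.+1%:R by rewrite /q -powRrM mulVf ?gt_eqF // powRr1.
have [N _ HN] : \forall n \near \oo,
    1 ^+ n / n`!%:R <= eps / 4 /\ q ^+ n / n`!%:R <= eps `^ s^-1 / 4.
  by near=> n; split; near: n; apply: exp_coeff_le_eventually;
    rewrite divr_gt0 ?powR_gt0.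
have [h1 h2] := HN N (leqnn N); exists N.
have fact_le : (N.+1`!%:R : R)^-1 <= (N`!%:R)^-1.
  by rewrite lef_pV2 ?posrE ?ltr0n ?fact_gt0 // ler_nat factS leq_pmull.
have fact_eps : 4 * (N`!%:R)^-1 <= eps.
  by move: h1; rewrite expr1n mul1r ler_pdivlMr // mulrC.
have fact_root : q ^+ N * (4 * (N`!%:R)^-1) <= eps `^ s^-1.
  by rewrite mulrCA; move: h2; rewrite ler_pdivlMr // mulrC.
split; first by apply: le_trans fact_eps; apply: ler_wpM2l.
rewrite natrX -qs -(powR_mulrn _ (powR_ge0 _ _)) powRAC (powR_mulrn _ q0).
rewrite -powRM ?exprn_ge0 ?mulr_ge0 ?invr_ge0 //.
have eps_root : (eps `^ s^-1) `^ s = eps.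
  by rewrite -powRrM mulVf ?gt_eqF // powRr1 // ltW.
apply: (@le_trans _ _ ((eps `^ s^-1) `^ s)); last by rewrite eps_root.
apply: ge0_ler_powR;
  rewrite ?nnegrE ?powR_ge0 ?mulr_ge0 ?exprn_ge0 ?invr_ge0 ?(ltW s0) //.
apply: le_trans fact_root; apply: ler_wpM2l; first exact: exprn_ge0.
exact: ler_wpM2l.
Unshelve. all: by end_near.
Qed.

Lemma hausdorff_pre_O1_bounded_set (s delta : R) : 0 < s -> 0 < delta ->
  hausdorff_pre s delta (@O1_bounded_set R) = 0%E.
Proof.
move=> s0 delta0; apply/le_anti; rewrite hausdorff_pre_ge0 andbT.
apply/lee_addgt0Pr => e e0; rewrite add0e.
have eps_gt0 m : 0 < Num.min delta (e / 2 ^+ m.+1).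
  by rewrite lt_min delta0 divr_gt0 ?exprn_gt0.
have [n n_spec] := choice (fun K => exists_depth K s0 (eps_gt0 K)).
have two2 : (2 * 2 : R) = 4 by rewrite -natrM.
apply: (@hausdorff_pre_le_ball_cover _ s delta e _ (fun K => O1_centers K (n K))
  (fun K => 2 * ((n K).+1`!%:R)^-1)) => [||K|K|K|x /O1_bounded_set_near_centers [K xK]].
- exact: ltW.
- by move=> K; rewrite -size_eq0 size_O1_centers expn_eq0.
- by rewrite mulr_ge0 ?invr_ge0.
- by have [+ _] := n_spec K; rewrite mulrA two2 le_min => /andP[].
- by have [_] := n_spec K; rewrite mulrA two2 size_O1_centers le_min => /andP[].
- by exists K; apply: xK.
Qed.

Lemma hausdorff_measure_O1_bounded_set (s : R) : 0 < s ->
  hausdorff_measure s (@O1_bounded_set R) = 0%E.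
Proof.
move=> s0; apply/le_anti/andP; split.
  by apply: ge_ereal_sup => _ [delta delta0 <-]; rewrite hausdorff_pre_O1_bounded_set.
apply: ereal_sup_ubound; exists 1; first exact: ltr01.
exact: hausdorff_pre_O1_bounded_set.
Qed.

End O1BoundedSet.

Theorem corollary1 (R : realType) : hausdorff_dim (@O1_bounded_set R) = 0.
Proof.
apply: inf_eq0 => [s s0 | s []//]; split; first exact: ltW.
exact: hausdorff_measure_O1_bounded_set.
Qed.
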